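(* Let $p\in[1,\infty]$, $\alpha\in[0,1]$ irrational, $\theta\in[0,1)$ and $\lambda\in\mathbb{R}$. Then $\sigma(H_{\lambda,\alpha,0})=\sigma(\widetilde H_{\lambda,\alpha,\theta})=\sigma(H_{\lambda,\alpha,\theta})$.
   Context: $v_{\alpha,\theta}(n)=\chi_{[1-\alpha,1)}(n\alpha+\theta\bmod 1)$, $\widetilde v_{\alpha,\theta}(n)=\chi_{(1-\alpha,1]\cup\{0\}}(n\alpha+\theta\bmod 1)$; $(H_{\lambda,\alpha,\theta}x)_n=x_{n+1}+x_{n-1}+\lambda v_{\alpha,\theta}(n)x_n$ and $(\widetilde H_{\lambda,\alpha,\theta}x)_n=x_{n+1}+x_{n-1}+\lambda\widetilde v_{\alpha,\theta}(n)x_n$, as operators on $\ell^p(\mathbb{Z})$. *)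

From Stdlib Require Import Reals ZArith.
From Coquelicot Require Import Coquelicot.
Open Scope R_scope.

Definition seqZ := Z -> Coquelicot.Complex.C.

(* a^q for a >= 0, q > 0, with the convention 0^q = 0. *)
Definition pw (a q : R) : R :=
  if Req_EM_T a 0 then 0 else Rpower a q.

Definition psum (q : R) (x : seqZ) (N : nat) : R :=
  sum_f_R0 (fun k => pw (Cmod (x (Z.of_nat k - Z.of_nat N)%Z)) q) (2 * N).

Definition lp_le (p : Rbar) (x : seqZ) (M : R) : Prop :=
  match p with
  | Finite q => forall N, psum q x N <= pw M q
  | p_infty => forall n, Cmod (x n) <= M
  | m_infty => False
  end.

Definition in_lp (p : Rbar) (x : seqZ) : Prop := exists M, 0 <= M /\ lp_le p x M.

Definition bounded_op (p : Rbar) (G : seqZ -> seqZ) : Prop :=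
  (forall x, in_lp p x -> in_lp p (G x)) /\
  (forall x y (c : Coquelicot.Complex.C), in_lp p x -> in_lp p y ->
     G (fun n => Cplus (x n) (Cmult c (y n))) =
     (fun n => Cplus (G x n) (Cmult c (G y n)))) /\
  (exists K, 0 <= K /\ forall x M, 0 <= M -> lp_le p x M -> lp_le p (G x) (K * M)).

Definition spectrum (p : Rbar) (H : seqZ -> seqZ) (z : Coquelicot.Complex.C) : Prop :=
  ~ exists G : seqZ -> seqZ,
      bounded_op p G /\
      (forall x, in_lp p x -> G (fun n => Cminus (H x n) (Cmult z (x n))) = x) /\
      (forall x, in_lp p x -> (fun n => Cminus (H (G x) n) (Cmult z (G x n))) = x).

Definition frac1 (y : R) : R := y - IZR (Int_part y).

Definition v (alpha theta : R) (n : Z) : R :=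
  let y := frac1 (IZR n * alpha + theta) in
  if Rle_dec (1 - alpha) y then (if Rlt_dec y 1 then 1 else 0) else 0.

Definition vt (alpha theta : R) (n : Z) : R :=
  let y := frac1 (IZR n * alpha + theta) in
  if Rlt_dec (1 - alpha) y then (if Rle_dec y 1 then 1 else 0)
  else if Req_EM_T y 0 then 1 else 0.

Definition schr (lambda : R) (V : Z -> R) (x : seqZ) : seqZ :=
  fun n => Cplus (Cplus (x (n + 1)%Z) (x (n - 1)%Z)) (Cmult (RtoC (lambda * V n)) (x n)).

Definition H (lambda alpha theta : R) : seqZ -> seqZ := schr lambda (v alpha theta).
Definition Ht (lambda alpha theta : R) : seqZ -> seqZ := schr lambda (vt alpha theta).

Definition irrational (a : R) : Prop :=
  ~ exists (m k : Z), k <> 0%Z /\ a * IZR k = IZR m.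

(* If H_W - z has a bounded inverse on l^p, of norm K, then so has every translate
   of H_W, with the same K.  Suppose every finite window of V occurs in some
   translate of W.  If w in l^p solves (H_V - z) w = 0 on [-r, r], multiply it by
   a tent of width r: the product lives where a translate of W agrees with V, and
   (H - z) only sees the discrete derivative of the tent, of size 1/r, so that
   |w_n| = O(K/r) near the origin.  This makes H_V - z injective, and it makes
   solutions on growing windows converge pointwise to a solution of norm at most
   K; hence z is not in the spectrum of H_V.
   For irrational alpha the fractional parts {k alpha} accumulate at 0 from both
   sides.  As v is right-continuous and vt left-continuous in the phase, every
   v_{alpha,theta'} is a limit of translates of vt_{alpha,theta} and vice versa. *)

From Stdlib Require Import Reals ZArith Lia Lra.
From Stdlib Require Import Classical_Prop FunctionalExtensionality IndefiniteDescription.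
From Coquelicot Require Import Coquelicot.
Open Scope R_scope.

(** * l^p estimates *)

Lemma pw_nonneg a q : 0 <= pw a q.
Proof. unfold pw, Rpower; destruct Req_EM_T; [lra | left; apply exp_pos]. Qed.

Lemma pw_0 q : pw 0 q = 0.
Proof. unfold pw; destruct Req_EM_T; [reflexivity | lra]. Qed.

Lemma pw_Rpower a q : 0 < a -> pw a q = Rpower a q.
Proof. intros; unfold pw; destruct Req_EM_T; [lra | reflexivity]. Qed.

Lemma pw_le_compat a b q : 0 < q -> 0 <= a <= b -> pw a q <= pw b q.
Proof.
  intros Hq [Ha Hab]. destruct (Req_dec a 0) as [->|Ha0].
  - rewrite pw_0; apply pw_nonneg.
  - rewrite !pw_Rpower by lra. apply Rle_Rpower_l; lra.
Qed.

Lemma pw_lt_compat a b q : 0 < q -> 0 <= a < b -> pw a q < pw b q.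
Proof.
  intros Hq [Ha Hab]. destruct (Req_dec a 0) as [->|Ha0].
  - rewrite pw_0, pw_Rpower by lra. apply exp_pos.
  - rewrite !pw_Rpower by lra. apply Rlt_Rpower_l; lra.
Qed.

Lemma pw_le_reg a b q : 0 < q -> 0 <= b -> pw a q <= pw b q -> a <= b.
Proof.
  intros Hq Hb Hab. destruct (Rle_or_lt a b) as [h|h]; [exact h|].
  pose proof (pw_lt_compat b a q Hq (conj Hb h)); lra.
Qed.

Lemma pw_mult a b q : 0 <= a -> 0 <= b -> pw (a * b) q = pw a q * pw b q.
Proof.
  intros Ha Hb. destruct (Req_dec a 0) as [->|Ha0].
  { rewrite Rmult_0_l, pw_0; ring. }
  destruct (Req_dec b 0) as [->|Hb0].
  { rewrite Rmult_0_r, pw_0; ring. }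
  rewrite !pw_Rpower by (try apply Rmult_lt_0_compat; lra).
  rewrite Rpower_mult_distr; lra.
Qed.

Lemma pw_Rmax a b q : pw (Rmax a b) q <= pw a q + pw b q.
Proof.
  pose proof (pw_nonneg a q); pose proof (pw_nonneg b q).
  apply Rmax_case_strong; intros; lra.
Qed.

Lemma pw_2_ge q : 1 <= q -> 2 <= pw 2 q.
Proof.
  intros Hq. rewrite pw_Rpower by lra.
  rewrite <- (Rpower_1 2) at 1 by lra. apply Rle_Rpower; lra.
Qed.

Lemma pw_le_id a q : 1 <= q -> 0 <= a <= 1 -> pw a q <= a.
Proof.
  intros Hq [Ha Ha1]. destruct (Req_dec a 0) as [->|Ha0].
  - rewrite pw_0; lra.
  - rewrite pw_Rpower by lra. rewrite <- (Rpower_1 a) at 2 by lra.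
    assert (ln a <= 0) by (rewrite <- ln_1; apply ln_le; lra).
    unfold Rpower. destruct (Req_dec (q * ln a) (1 * ln a)) as [E|E].
    + rewrite E; lra.
    + left; apply exp_increasing; nra.
Qed.

Lemma pw_Un_cv (u : nat -> R) a q : 1 <= q -> (forall j, 0 <= u j) -> 0 <= a ->
  Un_cv u a -> Un_cv (fun j => pw (u j) q) (pw a q).
Proof.
  intros Hq Hu Ha Hcv. destruct (Req_dec a 0) as [->|Ha0].
  - intros eps Heps. destruct (Hcv (Rmin eps 1)) as [J HJ]; [apply Rmin_pos; lra|].
    exists J; intros j Hj. specialize (HJ j Hj). unfold R_dist in *.
    rewrite pw_0, Rminus_0_r in *. pose proof (Hu j).
    rewrite Rabs_right in HJ by lra.
    pose proof (Rmin_l eps 1); pose proof (Rmin_r eps 1).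
    pose proof (pw_le_id (u j) q Hq ltac:(lra)). pose proof (pw_nonneg (u j) q).
    rewrite Rabs_right by lra. lra.
  - assert (Hc : continuity_pt (fun x => Rpower x q) a).
    { apply derivable_continuous_pt. exists (q * Rpower a (q - 1)).
      apply derivable_pt_lim_power; lra. }
    intros eps Heps. destruct (Hc eps Heps) as [d [Hd Hd']].
    destruct (Hcv (Rmin d (a / 2))) as [J HJ]; [apply Rmin_pos; lra|].
    exists J; intros j Hj. specialize (HJ j Hj). unfold R_dist in *.
    pose proof (Rmin_l d (a / 2)); pose proof (Rmin_r d (a / 2)).
    assert (0 < u j) by (apply Rabs_def2 in HJ; lra).
    rewrite !pw_Rpower by lra.
    destruct (Req_dec (u j) a) as [->|Hne].
    + rewrite Rminus_eq_0, Rabs_R0; lra.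
    + apply (Hd' (u j)). split; [split; [exact I | auto] | simpl; unfold R_dist; lra].
Qed.

Lemma sum_f_R0_le_upper h b1 b2 : (forall i, 0 <= h i) -> (b1 <= b2)%nat ->
  sum_f_R0 h b1 <= sum_f_R0 h b2.
Proof. intros Hh Hb. induction Hb; [lra|]. simpl. pose proof (Hh (S m)); lra. Qed.

Lemma sum_f_R0_term_le h c b : (forall i, 0 <= h i) -> (c <= b)%nat ->
  h c <= sum_f_R0 h b.
Proof.
  intros Hh Hb. apply Rle_trans with (sum_f_R0 h c).
  - destruct c; simpl; [lra|]. pose proof (cond_pos_sum h c Hh); lra.
  - apply sum_f_R0_le_upper; auto.
Qed.

Lemma sum_f_R0_shift_le h c a : (forall i, 0 <= h i) ->
  sum_f_R0 (fun i => h (i + c)%nat) a <= sum_f_R0 h (c + a).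
Proof.
  intros Hh. induction a; simpl.
  - rewrite Nat.add_0_r. apply sum_f_R0_term_le; auto.
  - replace (c + S a)%nat with (S (c + a)) by lia. simpl.
    replace (S (a + c)) with (S (c + a)) by lia. lra.
Qed.

Lemma sum_f_R0_Un_cv (F : nat -> nat -> R) (G : nat -> R) m :
  (forall i, Un_cv (fun j => F j i) (G i)) ->
  Un_cv (fun j => sum_f_R0 (F j) m) (sum_f_R0 G m).
Proof. intros HF. induction m; simpl; auto. apply CV_plus; auto. Qed.

Lemma Un_cv_le_const u l c : Un_cv u l -> (forall j, u j <= c) -> l <= c.
Proof.
  intros Hu Hc. apply (@Rle_cv_lim u (fun _ => c)); auto.
  intros e He; exists 0%nat; intros; unfold R_dist; rewrite Rminus_eq_0, Rabs_R0; lra.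
Qed.

Lemma exponent_cases p : Rbar_le (Finite 1) p ->
  (exists q, p = Finite q /\ 1 <= q) \/ p = p_infty.
Proof. destruct p as [q| |]; simpl; intros Hp; [left; exists q | right | contradiction]; auto. Qed.

Lemma lp_le_ext p f g M : (forall n, f n = g n) -> lp_le p g M -> lp_le p f M.
Proof. intros E. replace f with g; [auto | apply functional_extensionality; auto]. Qed.

Lemma lp_le_scale p f g c M : Rbar_le (Finite 1) p -> 0 <= c -> 0 <= M ->
  (forall n, Cmod (f n) <= c * Cmod (g n)) -> lp_le p g M -> lp_le p f (c * M).
Proof.
  intros hp Hc HM Hfg Hg. destruct (exponent_cases p hp) as [[q [-> Hq]] | ->]; simpl in *.
  - intros N. specialize (Hg N). unfold psum in *. rewrite pw_mult by auto.
    apply Rle_trans with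
      (sum_f_R0 (fun k => pw (Cmod (g (Z.of_nat k - Z.of_nat N)%Z)) q * pw c q) (2 * N)).
    + apply sum_Rle. intros i _. rewrite Rmult_comm, <- pw_mult by (auto; apply Cmod_ge_0).
      apply pw_le_compat; [lra|]. split; [apply Cmod_ge_0 | apply Hfg].
    + rewrite <- scal_sum. apply Rmult_le_compat_l; auto. apply pw_nonneg.
  - intros n. eapply Rle_trans; [apply Hfg|]. apply Rmult_le_compat_l; auto.
Qed.

Lemma lp_le_sum p f a b c M1 M2 : Rbar_le (Finite 1) p -> 0 <= c -> 0 <= M1 -> 0 <= M2 ->
  (forall n, Cmod (f n) <= c * (Cmod (a n) + Cmod (b n))) ->
  lp_le p a M1 -> lp_le p b M2 -> lp_le p f (c * (4 * (M1 + M2))).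
Proof.
  intros hp Hc H1 H2 Hf Ha Hb. destruct (exponent_cases p hp) as [[q [-> Hq]] | ->]; simpl in *.
  - intros N. specialize (Ha N); specialize (Hb N). unfold psum in *.
    set (A := fun k => pw (Cmod (a (Z.of_nat k - Z.of_nat N)%Z)) q) in *.
    set (B := fun k => pw (Cmod (b (Z.of_nat k - Z.of_nat N)%Z)) q) in *.
    apply Rle_trans with (sum_f_R0 (fun k => (A k + B k) * pw (2 * c) q) (2 * N)).
    + apply sum_Rle. intros i _. unfold A, B.
      set (u := Cmod (a _)). set (w := Cmod (b _)).
      assert (0 <= u) by apply Cmod_ge_0. assert (0 <= w) by apply Cmod_ge_0.
      pose proof (Rmax_l u w); pose proof (Rmax_r u w).
      apply Rle_trans with (pw (2 * c * Rmax u w) q).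
      * apply pw_le_compat; [lra|]. split; [apply Cmod_ge_0|].
        eapply Rle_trans; [apply Hf|]. unfold u, w in *. nra.
      * rewrite pw_mult, Rmult_comm by lra.
        apply Rmult_le_compat_r; [apply pw_nonneg | apply pw_Rmax].
    + rewrite <- scal_sum, plus_sum.
      assert (pw M1 q <= pw (M1 + M2) q) by (apply pw_le_compat; lra).
      assert (pw M2 q <= pw (M1 + M2) q) by (apply pw_le_compat; lra).
      pose proof (pw_2_ge q Hq). pose proof (pw_nonneg (M1 + M2) q).
      replace (c * (4 * (M1 + M2))) with ((2 * c) * (2 * (M1 + M2))) by ring.
      rewrite (pw_mult (2 * c)), (pw_mult 2 (M1 + M2)) by lra.
      apply Rmult_le_compat_l; [apply pw_nonneg | nra].
  - intros n. eapply Rle_trans; [apply Hf|]. apply Rmult_le_compat_l; auto.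
    specialize (Ha n); specialize (Hb n); lra.
Qed.

Definition translate {A : Type} (k : Z) (x : Z -> A) : Z -> A := fun n => x (n + k)%Z.

Lemma lp_le_translate p x M k : Rbar_le (Finite 1) p -> lp_le p x M ->
  lp_le p (translate k x) M.
Proof.
  intros hp Hx. destruct (exponent_cases p hp) as [[q [-> Hq]] | ->]; simpl in *; [|intro; apply Hx].
  intros N. specialize (Hx (N + Z.abs_nat k)%nat). eapply Rle_trans; [|exact Hx].
  unfold psum.
  set (h := fun i => pw (Cmod (x (Z.of_nat i - Z.of_nat (N + Z.abs_nat k))%Z)) q).
  set (c := Z.to_nat (Z.abs k + k)).
  apply Rle_trans with (sum_f_R0 (fun i => h (i + c)%nat) (2 * N)).
  - right. apply sum_eq. intros i _. unfold h, translate. do 3 f_equal. unfold c. lia.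
  - eapply Rle_trans; [apply sum_f_R0_shift_le; intros; apply pw_nonneg|].
    apply sum_f_R0_le_upper; [intros; apply pw_nonneg | unfold c; lia].
Qed.

Lemma Cmod_le_of_lp_le p x M n : Rbar_le (Finite 1) p -> 0 <= M -> lp_le p x M ->
  Cmod (x n) <= M.
Proof.
  intros hp HM Hx. destruct (exponent_cases p hp) as [[q [-> Hq]] | ->]; simpl in *; [|auto].
  specialize (Hx (Z.abs_nat n)). unfold psum in Hx.
  apply (pw_le_reg _ _ q); [lra | lra |]. eapply Rle_trans; [|exact Hx].
  set (h := fun k => pw (Cmod (x (Z.of_nat k - Z.of_nat (Z.abs_nat n))%Z)) q).
  replace (pw (Cmod (x n)) q) with (h (Z.to_nat (n + Z.abs n))).
  - apply sum_f_R0_term_le; [intros; apply pw_nonneg | lia].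
  - unfold h. do 3 f_equal. lia.
Qed.

Lemma in_lp_add_scal p a b c : Rbar_le (Finite 1) p -> in_lp p a -> in_lp p b ->
  in_lp p (fun n => Cplus (a n) (Cmult c (b n))).
Proof.
  intros hp [Ma [HMa Ha]] [Mb [HMb Hb]]. pose proof (Cmod_ge_0 c).
  assert (Hcb : lp_le p (fun n => Cmult c (b n)) (Cmod c * Mb)).
  { apply (lp_le_scale p _ b); auto. intros n. rewrite Cmod_mult. lra. }
  exists (1 * (4 * (Ma + Cmod c * Mb))). split; [nra|].
  apply (lp_le_sum p _ a (fun n => Cmult c (b n))); auto; try lra; try nra.
  intros n. rewrite Rmult_1_l. apply Cmod_triangle.
Qed.

Definition C_cv (u : nat -> C) (l : C) : Prop :=
  forall eps, 0 < eps -> exists J, forall j, (J <= j)%nat -> Cmod (Cminus (u j) l) < eps.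

Definition C_Cauchy (u : nat -> C) : Prop :=
  forall eps, 0 < eps -> exists J, forall i j, (J <= i)%nat -> (J <= j)%nat ->
    Cmod (Cminus (u i) (u j)) < eps.

Lemma Cmod_sub_le a b : Cmod (Cminus a b) <= Cmod a + Cmod b.
Proof. unfold Cminus. eapply Rle_trans; [apply Cmod_triangle|]. rewrite Cmod_opp; lra. Qed.

Lemma C_cv_Cmod u l : C_cv u l -> Un_cv (fun j => Cmod (u j)) (Cmod l).
Proof.
  intros Hu eps Heps. destruct (Hu eps Heps) as [J HJ]. exists J; intros j Hj.
  specialize (HJ j Hj). unfold R_dist.
  assert (Cmod (u j) <= Cmod (Cminus (u j) l) + Cmod l).
  { replace (u j) with (Cplus (Cminus (u j) l) l) at 1 by (unfold Cminus; ring).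
    apply Cmod_triangle. }
  assert (Cmod l <= Cmod (Cminus (u j) l) + Cmod (u j)).
  { replace l with (Cplus (u j) (Copp (Cminus (u j) l))) at 1 by (unfold Cminus; ring).
    eapply Rle_trans; [apply Cmod_triangle|]. rewrite Cmod_opp; lra. }
  apply Rabs_def1; lra.
Qed.

Lemma C_Cauchy_cv u : C_Cauchy u -> exists l, C_cv u l.
Proof.
  intros Hu.
  assert (Hcomp : forall pr : C -> R, (forall w, Rabs (pr w) <= Cmod w) ->
            (forall a b, pr (Cminus a b) = pr a - pr b) -> Cauchy_crit (fun j => pr (u j))).
  { intros pr Hpr Hsub e He. destruct (Hu e He) as [J HJ]. exists J. intros i j Hi Hj.
    unfold R_dist. rewrite <- Hsub. eapply Rle_lt_trans; [apply Hpr | apply HJ; lia]. }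
  destruct (Rcomplete.R_complete _ (Hcomp fst
    (fun w => Rle_trans _ _ _ (Rmax_l _ _) (Rmax_Cmod w)) (fun a b => eq_refl))) as [l1 Hl1].
  destruct (Rcomplete.R_complete _ (Hcomp snd
    (fun w => Rle_trans _ _ _ (Rmax_r _ _) (Rmax_Cmod w)) (fun a b => eq_refl))) as [l2 Hl2].
  exists (l1, l2). intros eps Heps.
  destruct (Hl1 (eps / 2)) as [J1 HJ1]; [lra|].
  destruct (Hl2 (eps / 2)) as [J2 HJ2]; [lra|].
  exists (J1 + J2)%nat. intros j Hj.
  specialize (HJ1 j ltac:(lia)); specialize (HJ2 j ltac:(lia)). unfold R_dist in *.
  assert (sqrt 2 < 2) by (pose proof (sqrt_sqrt 2); pose proof (sqrt_pos 2); nra).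
  set (m := Rmax (Rabs (fst (u j) - l1)) (Rabs (snd (u j) - l2))).
  assert (0 <= m) by (eapply Rle_trans; [apply Rabs_pos | apply Rmax_l]).
  assert (m < eps / 2) by (apply Rmax_lub_lt; auto).
  eapply Rle_lt_trans; [apply Cmod_2Rmax|]. change (sqrt 2 * m < eps). nra.
Qed.

Lemma C_cv_eventually_const u l a : C_cv u l -> (exists J, forall j, (J <= j)%nat -> u j = a) ->
  l = a.
Proof.
  intros Hu [J HJ].
  destruct (Req_dec (Cmod (Cminus a l)) 0) as [E|E].
  - apply Cmod_eq_0 in E.
    replace l with (Cplus a (Copp (Cminus a l))) by (unfold Cminus; ring). rewrite E. ring.
  - pose proof (Cmod_ge_0 (Cminus a l)).
    destruct (Hu (Cmod (Cminus a l))) as [J' HJ']; [lra|].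
    specialize (HJ' (J + J')%nat ltac:(lia)). rewrite HJ in HJ' by lia. lra.
Qed.

Lemma lp_le_limit p (xs : nat -> seqZ) x M : Rbar_le (Finite 1) p -> 0 <= M ->
  (forall n, C_cv (fun j => xs j n) (x n)) -> (forall j, lp_le p (xs j) M) -> lp_le p x M.
Proof.
  intros hp HM Hcv Hxs. destruct (exponent_cases p hp) as [[q [-> Hq]] | ->]; simpl in *.
  - intros N. apply (Un_cv_le_const (fun j => psum q (xs j) N)); [|intros; apply Hxs].
    apply (sum_f_R0_Un_cv (fun j k => pw (Cmod (xs j (Z.of_nat k - Z.of_nat N)%Z)) q)).
    intros i. apply pw_Un_cv; auto using Cmod_ge_0, C_cv_Cmod.
  - intros n. apply (Un_cv_le_const (fun j => Cmod (xs j n))); [|intros; apply Hxs].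
    apply C_cv_Cmod, Hcv.
Qed.

(** * The operator H - z *)

Definition schrz (lam : R) (V : Z -> R) (z : C) (x : seqZ) : seqZ :=
  fun n => Cminus (schr lam V x n) (Cmult z (x n)).

Lemma schrz_add_scal lam V z a b c n :
  schrz lam V z (fun m => Cplus (a m) (Cmult c (b m))) n =
  Cplus (schrz lam V z a n) (Cmult c (schrz lam V z b n)).
Proof. unfold schrz, schr, Cminus. ring. Qed.

Lemma schrz_sub lam V z a b n :
  schrz lam V z (fun m => Cminus (a m) (b m)) n = Cminus (schrz lam V z a n) (schrz lam V z b n).
Proof. unfold schrz, schr, Cminus. ring. Qed.

Lemma schrz_decomp lam V z x n :
  schrz lam V z x n =
  Cplus (Cplus (x (n + 1)%Z) (x (n - 1)%Z)) (Cmult (Cminus (RtoC (lam * V n)) z) (x n)).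
Proof. unfold schrz, schr, Cminus. ring. Qed.

Lemma schrz_eq_at lam W V z x n : W n = V n -> schrz lam W z x n = schrz lam V z x n.
Proof. intros E. unfold schrz, schr. rewrite E. reflexivity. Qed.

Lemma schrz_eq_on_support lam W V z (x : seqZ) (r : nat) :
  (forall n, (Z.abs n <= Z.of_nat r)%Z -> W n = V n) ->
  (forall n, (Z.of_nat r < Z.abs n)%Z -> x n = 0%C) ->
  forall n, schrz lam W z x n = schrz lam V z x n.
Proof.
  intros HWV Hx n. destruct (Z_le_gt_dec (Z.abs n) (Z.of_nat r)) as [h|h].
  - apply schrz_eq_at; auto.
  - rewrite !schrz_decomp, (Hx n) by lia. ring.
Qed.

Lemma Cmod_schrz_le lam V z x n :
  Cmod (schrz lam V z x n) <=
  Cmod (x (n + 1)%Z) + Cmod (x (n - 1)%Z) + (Rabs (lam * V n) + Cmod z) * Cmod (x n).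
Proof.
  rewrite schrz_decomp.
  eapply Rle_trans; [apply Cmod_triangle|]. apply Rplus_le_compat; [apply Cmod_triangle|].
  rewrite Cmod_mult. apply Rmult_le_compat_r; [apply Cmod_ge_0|].
  eapply Rle_trans; [apply Cmod_sub_le|]. rewrite Cmod_R. lra.
Qed.

Lemma schrz_lp_le p lam V z c : Rbar_le (Finite 1) p -> 0 <= c ->
  (forall n, Rabs (lam * V n) <= c) ->
  exists K, 0 <= K /\ forall x M, 0 <= M -> lp_le p x M -> lp_le p (schrz lam V z x) (K * M).
Proof.
  intros hp Hc HV. pose proof (Cmod_ge_0 z).
  exists (4 * (8 + (c + Cmod z))). split; [lra|]. intros x M HM Hx.
  assert (Hnb : lp_le p (fun n => Cplus (x (n + 1)%Z) (x (n - 1)%Z)) (1 * (4 * (M + M)))).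
  { apply (lp_le_sum p _ (fun n => x (n + 1)%Z) (fun n => x (n + -1)%Z)); auto; try lra;
      try apply lp_le_translate; auto.
    intros n. rewrite Rmult_1_l. replace (n - 1)%Z with (n + -1)%Z by lia. apply Cmod_triangle. }
  assert (Hpot : lp_le p (fun n => Cmult (Cminus (RtoC (lam * V n)) z) (x n)) ((c + Cmod z) * M)).
  { apply (lp_le_scale p _ x); auto; [lra|]. intros n. rewrite Cmod_mult.
    apply Rmult_le_compat_r; [apply Cmod_ge_0|].
    eapply Rle_trans; [apply Cmod_sub_le|]. rewrite Cmod_R. specialize (HV n); lra. }
  replace (4 * (8 + (c + Cmod z)) * M)
    with (1 * (4 * (1 * (4 * (M + M)) + (c + Cmod z) * M))) by ring.
  apply (lp_le_sum p _ (fun n => Cplus (x (n + 1)%Z) (x (n - 1)%Z))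
           (fun n => Cmult (Cminus (RtoC (lam * V n)) z) (x n))); auto; try lra; try nra.
  intros n. rewrite Rmult_1_l, schrz_decomp. apply Cmod_triangle.
Qed.

Definition boundedly_invertible (p : Rbar) (T : seqZ -> seqZ) (K : R) : Prop :=
  0 <= K /\
  (forall y M, 0 <= M -> lp_le p y M -> exists x, lp_le p x (K * M) /\ T x = y) /\
  (forall w M, 0 <= M -> in_lp p w -> lp_le p (T w) M -> lp_le p w (K * M)).

Lemma boundedly_invertible_of_not_spectrum p lam V z :
  ~ spectrum p (schr lam V) z -> exists K, boundedly_invertible p (schrz lam V z) K.
Proof.
  intros Hns. apply NNPP in Hns.
  destruct Hns as [G [[_ [_ [K [HK HGK]]]] [HGl HGr]]].
  exists K. split; [exact HK | split].
  - intros y M HM Hy. exists (G y). split; [apply HGK; auto | apply HGr; exists M; auto].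
  - intros w M HM Hw HT. rewrite <- (HGl w Hw). apply HGK; auto.
Qed.

Lemma translate_opp_r {A : Type} k (x : Z -> A) : translate k (translate (- k) x) = x.
Proof. apply functional_extensionality; intros n. unfold translate. f_equal; lia. Qed.

Lemma schrz_translate_op lam V z k x :
  schrz lam (translate k V) z (translate k x) = translate k (schrz lam V z x).
Proof.
  apply functional_extensionality; intros n. unfold schrz, schr, translate.
  replace (n + 1 + k)%Z with (n + k + 1)%Z by lia.
  replace (n - 1 + k)%Z with (n + k - 1)%Z by lia. reflexivity.
Qed.

Lemma boundedly_invertible_translate p lam V z K k : Rbar_le (Finite 1) p ->
  boundedly_invertible p (schrz lam V z) K ->
  boundedly_invertible p (schrz lam (translate k V) z) K.
Proof.
  intros hp [HK [Hsol Hbnd]]. split; [exact HK | split].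
  - intros y M HM Hy.
    destruct (Hsol (translate (- k) y) M HM (lp_le_translate p y M (- k) hp Hy)) as [x [Hx Ex]].
    exists (translate k x). split; [apply lp_le_translate; auto|].
    rewrite schrz_translate_op, Ex. apply translate_opp_r.
  - intros w M HM [Mw [HMw Hw]] HT.
    rewrite <- (translate_opp_r k w). apply lp_le_translate; auto.
    apply Hbnd; auto.
    + exists Mw; split; auto. apply lp_le_translate; auto.
    + rewrite <- (translate_opp_r (- k) V), Z.opp_involutive, schrz_translate_op.
      apply lp_le_translate; auto.
Qed.

Definition tent (r : nat) (n : Z) : R := Rmax 0 (1 - IZR (Z.abs n) / INR r).

Definition cutoff (r : nat) (w : seqZ) : seqZ := fun n => Cmult (RtoC (tent r n)) (w n).

Lemma tent_nonneg r n : 0 <= tent r n.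
Proof. apply Rmax_l. Qed.

Lemma tent_le_1 r n : tent r n <= 1.
Proof.
  unfold tent. apply Rmax_lub; [lra|].
  destruct r as [|r]; [simpl; unfold Rdiv; rewrite Rinv_0; lra|].
  assert (0 <= IZR (Z.abs n)) by (apply IZR_le; lia).
  assert (0 <= IZR (Z.abs n) / INR (S r)) by (apply Rdiv_le_0_compat; auto; apply lt_0_INR; lia).
  lra.
Qed.

Lemma tent_outside r n : (0 < r)%nat -> (Z.of_nat r <= Z.abs n)%Z -> tent r n = 0.
Proof.
  intros Hr Hn. unfold tent. apply Rmax_left.
  assert (0 < INR r) by (apply lt_0_INR; auto).
  assert (INR r <= IZR (Z.abs n)) by (rewrite INR_IZR_INZ; apply IZR_le; auto).
  assert (1 <= IZR (Z.abs n) / INR r) by (apply Rle_div_r; lra).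
  lra.
Qed.

Lemma tent_ge_half r n : (0 < r)%nat -> (2 * Z.abs n <= Z.of_nat r)%Z -> / 2 <= tent r n.
Proof.
  intros Hr Hn. unfold tent. eapply Rle_trans; [|apply Rmax_r].
  assert (0 < INR r) by (apply lt_0_INR; auto).
  assert (2 * IZR (Z.abs n) <= INR r)
    by (rewrite INR_IZR_INZ, <- mult_IZR; apply IZR_le; auto).
  assert (IZR (Z.abs n) / INR r <= / 2) by (apply Rle_div_l; lra).
  lra.
Qed.

Lemma tent_step r n d : (0 < r)%nat -> (d = 1 \/ d = -1)%Z ->
  Rabs (tent r (n + d) - tent r n) <= / INR r.
Proof.
  intros Hr Hd. unfold tent.
  assert (0 < INR r) by (apply lt_0_INR; auto).
  assert (Hlip : forall a b, Rabs (Rmax 0 a - Rmax 0 b) <= Rabs (a - b)).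
  { intros a b. unfold Rmax. destruct (Rle_dec 0 a), (Rle_dec 0 b); unfold Rabs;
      repeat destruct Rcase_abs; lra. }
  eapply Rle_trans; [apply Hlip|].
  replace (1 - IZR (Z.abs (n + d)) / INR r - (1 - IZR (Z.abs n) / INR r))
    with (IZR (Z.abs n - Z.abs (n + d)) * / INR r) by (rewrite minus_IZR; field; lra).
  rewrite Rabs_mult, (Rabs_right (/ INR r)) by (left; apply Rinv_0_lt_compat; auto).
  rewrite <- (Rmult_1_l (/ INR r)) at 2. apply Rmult_le_compat_r.
  - left; apply Rinv_0_lt_compat; auto.
  - rewrite <- abs_IZR. apply IZR_le. lia.
Qed.

Lemma schrz_cutoff lam V z r w n :
  schrz lam V z (cutoff r w) n =
  Cplus (Cplus (Cmult (RtoC (tent r n)) (schrz lam V z w n))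
     (Cmult (Cminus (RtoC (tent r (n + 1)%Z)) (RtoC (tent r n))) (w (n + 1)%Z)))
     (Cmult (Cminus (RtoC (tent r (n + -1)%Z)) (RtoC (tent r n))) (w (n + -1)%Z)).
Proof.
  unfold schrz, schr, cutoff. replace (n - 1)%Z with (n + -1)%Z by lia. unfold Cminus. ring.
Qed.

Lemma Cmod_RtoC_sub a b : Cmod (Cminus (RtoC a) (RtoC b)) = Rabs (a - b).
Proof. rewrite <- Cmod_R. f_equal. unfold Cminus, Cplus, Copp, RtoC. simpl. f_equal; ring. Qed.

(* Only the discrete derivative of the tent survives, and it is O(1/r). *)
Lemma lp_le_schrz_cutoff p lam V z w M (r : nat) :
  Rbar_le (Finite 1) p -> (0 < r)%nat -> 0 <= M -> lp_le p w M ->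
  (forall n, (Z.abs n <= Z.of_nat r)%Z -> schrz lam V z w n = 0%C) ->
  lp_le p (schrz lam V z (cutoff r w)) (/ INR r * (4 * (M + M))).
Proof.
  intros hp Hr HM Hw Hker.
  assert (0 < / INR r) by (apply Rinv_0_lt_compat, lt_0_INR; auto).
  apply (lp_le_sum p _ (translate 1 w) (translate (-1) w)); auto; try lra;
    try apply lp_le_translate; auto.
  intros n. rewrite schrz_cutoff.
  assert (E : Cmult (RtoC (tent r n)) (schrz lam V z w n) = 0%C).
  { destruct (Z_le_gt_dec (Z.abs n) (Z.of_nat r)) as [h|h].
    - rewrite Hker by auto. ring.
    - rewrite tent_outside by (auto; lia). ring. }
  rewrite E, Cplus_0_l. eapply Rle_trans; [apply Cmod_triangle|].
  rewrite !Cmod_mult, !Cmod_RtoC_sub, Rmult_plus_distr_l.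
  pose proof (tent_step r n 1 Hr ltac:(lia)). pose proof (tent_step r n (-1) Hr ltac:(lia)).
  apply Rplus_le_compat; apply Rmult_le_compat_r; auto using Cmod_ge_0.
Qed.

Lemma lp_le_cutoff p r w M : Rbar_le (Finite 1) p -> 0 <= M -> lp_le p w M ->
  lp_le p (cutoff r w) M.
Proof.
  intros hp HM Hw. rewrite <- (Rmult_1_l M). apply (lp_le_scale p _ w); auto; [lra|].
  intros n. unfold cutoff. rewrite Cmod_mult, Cmod_R, Rabs_right by apply Rle_ge, tent_nonneg.
  apply Rmult_le_compat_r; [apply Cmod_ge_0 | apply tent_le_1].
Qed.

Lemma exists_nat_div_lt (C eps : R) (N : nat) : 0 < eps ->
  exists r : nat, (N <= r)%nat /\ (0 < r)%nat /\ C / INR r < eps.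
Proof.
  intros Heps. destruct (INR_unbounded (C / eps)) as [m Hm].
  exists (N + m + 1)%nat. split; [lia | split; [lia|]].
  assert (INR m < INR (N + m + 1)) by (apply lt_INR; lia).
  assert (0 < INR (N + m + 1)) by (apply lt_0_INR; lia).
  apply Rlt_div_l; auto. apply Rlt_div_l in Hm; [|exact Heps]. nra.
Qed.

Lemma C_cv_schrz lam V z (xs : nat -> seqZ) x n :
  (forall m, C_cv (fun j => xs j m) (x m)) ->
  C_cv (fun j => schrz lam V z (xs j) n) (schrz lam V z x n).
Proof.
  intros Hcv eps Heps.
  set (c := Rabs (lam * V n) + Cmod z).
  assert (Hc : 0 <= c) by (pose proof (Rabs_pos (lam * V n)); pose proof (Cmod_ge_0 z); unfold c; lra).
  set (e := eps / (3 + c)).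
  assert (He : 0 < e) by (apply Rdiv_lt_0_compat; lra).
  destruct (Hcv (n + 1)%Z e He) as [J1 H1].
  destruct (Hcv (n - 1)%Z e He) as [J2 H2].
  destruct (Hcv n e He) as [J3 H3].
  exists (J1 + J2 + J3)%nat. intros j Hj.
  specialize (H1 j ltac:(lia)); specialize (H2 j ltac:(lia)); specialize (H3 j ltac:(lia)).
  rewrite <- schrz_sub. eapply Rle_lt_trans; [apply Cmod_schrz_le|]. fold c.
  assert (c * Cmod (Cminus (xs j n) (x n)) <= c * e) by (apply Rmult_le_compat_l; lra).
  assert (e * (3 + c) = eps) by (unfold e; field; lra).
  nra.
Qed.

(** * Spectra under limits of translates *)

Definition approx_by_translates (W V : Z -> R) : Prop :=
  forall r : nat, exists k, forall n, (Z.abs n <= Z.of_nat r)%Z -> translate k W n = V n.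

Section TranslateClosure.

Variables (p : Rbar) (lam : R) (W V : Z -> R) (z : C) (K : R).
Hypothesis hp : Rbar_le (Finite 1) p.
Hypothesis HW : boundedly_invertible p (schrz lam W z) K.
Hypothesis HWV : approx_by_translates W V.

(* The cut-off of [w] lives where a translate of [W] agrees with [V], so the
   a priori bound of that translate (which is again [K]) applies to it. *)
Lemma Cmod_le_of_window_kernel w M r n : (0 < r)%nat -> (2 * Z.abs n <= Z.of_nat r)%Z ->
  0 <= M -> lp_le p w M ->
  (forall m, (Z.abs m <= Z.of_nat r)%Z -> schrz lam V z w m = 0%C) ->
  Cmod (w n) <= 16 * K * M / INR r.
Proof.
  intros Hr Hn HM Hw Hker.
  destruct (HWV r) as [k Hk].
  destruct (boundedly_invertible_translate p lam W z K k hp HW) as [HK [_ Hbnd]].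
  assert (0 < INR r) by (apply lt_0_INR; auto).
  assert (Hbd : 0 <= / INR r * (4 * (M + M)))
    by (apply Rmult_le_pos; [apply Rlt_le, Rinv_0_lt_compat |]; lra).
  assert (Hcut : lp_le p (cutoff r w) (K * (/ INR r * (4 * (M + M))))).
  { apply Hbnd; [exact Hbd | exists M; split; [auto | apply lp_le_cutoff; auto] |].
    apply (lp_le_ext p _ (schrz lam V z (cutoff r w))).
    - apply (schrz_eq_on_support lam _ _ z (cutoff r w) r); [exact Hk|].
      intros m Hm. unfold cutoff. rewrite tent_outside by (auto; lia). ring.
    - apply lp_le_schrz_cutoff; auto. }
  apply (Cmod_le_of_lp_le p _ _ n hp) in Hcut; [|apply Rmult_le_pos; auto].
  unfold cutoff in Hcut. rewrite Cmod_mult, Cmod_R, Rabs_right in Hcut by apply Rle_ge, tent_nonneg.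
  pose proof (tent_ge_half r n Hr Hn). pose proof (Cmod_ge_0 (w n)).
  assert (/ 2 * Cmod (w n) <= tent r n * Cmod (w n)) by (apply Rmult_le_compat_r; lra).
  replace (16 * K * M / INR r) with (2 * (K * (/ INR r * (4 * (M + M))))) by (field; lra).
  lra.
Qed.

Lemma schrz_kernel_trivial w : in_lp p w -> (forall n, schrz lam V z w n = 0%C) ->
  forall n, w n = 0%C.
Proof.
  intros [M [HM Hw]] Hker n. apply Cmod_eq_0.
  destruct (Req_dec (Cmod (w n)) 0) as [E|E]; [exact E | exfalso].
  pose proof (Cmod_ge_0 (w n)).
  destruct (exists_nat_div_lt (16 * K * M) (Cmod (w n)) (Z.to_nat (2 * Z.abs n)) ltac:(lra))
    as [r [Hrn [Hr Hsmall]]].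
  pose proof (Cmod_le_of_window_kernel w M r n Hr ltac:(lia) HM Hw (fun m _ => Hker m)).
  lra.
Qed.

Lemma window_solutions y M : 0 <= M -> lp_le p y M -> forall j : nat,
  exists x, lp_le p x (K * M) /\ forall n, (Z.abs n <= Z.of_nat j)%Z -> schrz lam V z x n = y n.
Proof.
  intros HM Hy j. destruct (HWV j) as [k Hk].
  destruct (boundedly_invertible_translate p lam W z K k hp HW) as [_ [Hsol _]].
  destruct (Hsol y M HM Hy) as [x [Hx Ex]]. exists x. split; [exact Hx|].
  intros n Hn. rewrite <- (schrz_eq_at lam _ _ z x n (Hk n Hn)), Ex. reflexivity.
Qed.

Lemma window_solutions_Cauchy (xs : nat -> seqZ) y M : 0 <= M ->
  (forall j, lp_le p (xs j) (K * M) /\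
     forall n, (Z.abs n <= Z.of_nat j)%Z -> schrz lam V z (xs j) n = y n) ->
  forall n, C_Cauchy (fun j => xs j n).
Proof.
  intros HM Hxs n eps Heps.
  assert (HK : 0 <= K) by apply HW.
  set (Md := 1 * (4 * (K * M + K * M))).
  assert (HMd : 0 <= Md) by (unfold Md; nra).
  destruct (exists_nat_div_lt (16 * K * Md) eps (Z.to_nat (2 * Z.abs n)) Heps)
    as [r [Hrn [Hr Hsmall]]].
  exists r. intros i j Hi Hj.
  set (d := fun m => Cminus (xs i m) (xs j m)).
  assert (Hd : lp_le p d Md).
  { apply (lp_le_sum p d (xs i) (xs j)); auto; try lra; try nra; try apply Hxs.
    intros m. rewrite Rmult_1_l. apply Cmod_sub_le. }
  assert (Hker : forall m, (Z.abs m <= Z.of_nat r)%Z -> schrz lam V z d m = 0%C).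
  { intros m Hm. unfold d. rewrite schrz_sub, (proj2 (Hxs i)), (proj2 (Hxs j)) by lia.
    unfold Cminus. ring. }
  pose proof (Cmod_le_of_window_kernel d Md r n Hr ltac:(lia) HMd Hd Hker). unfold d in *. lra.
Qed.

(* Window-wise solutions converge pointwise, and in the limit solve the equation everywhere. *)
Lemma schrz_solution_bound y M : 0 <= M -> lp_le p y M ->
  exists x, lp_le p x (K * M) /\ schrz lam V z x = y.
Proof.
  intros HM Hy.
  assert (HK : 0 <= K) by apply HW.
  destruct (functional_choice _ (window_solutions y M HM Hy)) as [xs Hxs].
  pose proof (window_solutions_Cauchy xs y M HM Hxs) as Hcauchy.
  destruct (functional_choice _ (fun n => C_Cauchy_cv _ (Hcauchy n))) as [x Hx].
  exists x. split.
  - apply (lp_le_limit p xs); auto; [nra|]. intros j; apply Hxs.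
  - apply functional_extensionality; intros n.
    apply (C_cv_eventually_const (fun j => schrz lam V z (xs j) n)); [apply C_cv_schrz, Hx|].
    exists (Z.to_nat (Z.abs n)). intros j Hj. apply Hxs. lia.
Qed.

End TranslateClosure.

Lemma schrz_injective p lam V z a b : Rbar_le (Finite 1) p ->
  (forall w, in_lp p w -> (forall n, schrz lam V z w n = 0%C) -> forall n, w n = 0%C) ->
  in_lp p a -> in_lp p b -> schrz lam V z a = schrz lam V z b -> a = b.
Proof.
  intros hp Hker Ha Hb Eab.
  assert (Em1 : RtoC (-1) = Copp 1) by (apply injective_projections; simpl; ring).
  set (d := fun n => Cplus (a n) (Cmult (RtoC (-1)) (b n))).
  assert (Hd : forall n, d n = 0%C).
  { apply Hker; [apply in_lp_add_scal; auto|].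
    intros n. unfold d. rewrite schrz_add_scal, Eab, Em1. ring. }
  apply functional_extensionality; intros n.
  replace (a n) with (Cplus (d n) (b n)) by (unfold d; rewrite Em1; ring).
  rewrite Hd. ring.
Qed.

Lemma not_spectrum_of_solvable p lam V z c K : Rbar_le (Finite 1) p -> 0 <= c ->
  (forall n, Rabs (lam * V n) <= c) -> 0 <= K ->
  (forall w, in_lp p w -> (forall n, schrz lam V z w n = 0%C) -> forall n, w n = 0%C) ->
  (forall y M, 0 <= M -> lp_le p y M -> exists x, lp_le p x (K * M) /\ schrz lam V z x = y) ->
  ~ spectrum p (schr lam V) z.
Proof.
  intros hp Hc HV HK Hker Hsol.
  pose proof (schrz_injective p lam V z) as Hinj.
  destruct (schrz_lp_le p lam V z c hp Hc HV) as [C [HC HCb]].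
  (* The inverse is chosen on all sequences; its values outside l^p are irrelevant. *)
  assert (Hinv : forall y, exists x, in_lp p y ->
    in_lp p x /\ schrz lam V z x = y /\
    forall M, 0 <= M -> lp_le p y M -> lp_le p x (K * M)).
  { intros y. destruct (classic (in_lp p y)) as [[M0 [HM0 Hy0]] | Hy]; [|exists y; tauto].
    destruct (Hsol y M0 HM0 Hy0) as [x0 [Hx0 Ex0]].
    exists x0. intros _. split; [exists (K * M0); split; [nra | auto] | split; [exact Ex0|]].
    intros M HM Hy. destruct (Hsol y M HM Hy) as [x1 [Hx1 Ex1]].
    replace x0 with x1; [exact Hx1|].
    apply Hinj; auto; [exists (K * M) | exists (K * M0) | congruence]; split; auto; nra. }
  destruct (functional_choice _ Hinv) as [G HG].
  intros Hs. apply Hs. exists G. split; [split; [|split] | split].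
  - intros y Hy. apply HG, Hy.
  - intros x y c0 Hx Hy.
    assert (Hxy : in_lp p (fun n => Cplus (x n) (Cmult c0 (y n)))) by (apply in_lp_add_scal; auto).
    destruct (HG _ Hx) as [HGx [Ex _]]. destruct (HG _ Hy) as [HGy [Ey _]].
    destruct (HG _ Hxy) as [_ [Exy _]].
    apply Hinj; auto; [apply HG, Hxy | apply in_lp_add_scal; auto |].
    rewrite Exy. apply functional_extensionality; intros n.
    rewrite schrz_add_scal, Ex, Ey. reflexivity.
  - exists K. split; [exact HK|]. intros x M HM Hx.
    destruct (HG x (ex_intro _ M (conj HM Hx))) as [_ [_ HGb]]. apply HGb; auto.
  - intros x [M [HM Hx]].
    assert (HTx : in_lp p (schrz lam V z x)) by (exists (C * M); split; [nra | auto]).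
    destruct (HG _ HTx) as [HGTx [E _]]. apply Hinj; auto. exists M; auto.
  - intros x Hx. apply HG, Hx.
Qed.

Lemma not_spectrum_approx_by_translates p lam W V z c : Rbar_le (Finite 1) p -> 0 <= c ->
  (forall n, Rabs (lam * V n) <= c) -> approx_by_translates W V ->
  ~ spectrum p (schr lam W) z -> ~ spectrum p (schr lam V) z.
Proof.
  intros hp Hc HV HWV HW.
  destruct (boundedly_invertible_of_not_spectrum p lam W z HW) as [K HK].
  apply (not_spectrum_of_solvable p lam V z c K hp Hc HV (proj1 HK)).
  - apply (schrz_kernel_trivial p lam W V z K hp HK HWV).
  - apply (schrz_solution_bound p lam W V z K hp HK HWV).
Qed.

(** * Sturmian potentials *)

Lemma frac1_Int_part x : x = frac1 x + IZR (Int_part x).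
Proof. unfold frac1; ring. Qed.

Lemma frac1_range x : 0 <= frac1 x < 1.
Proof. unfold frac1. destruct (base_Int_part x). lra. Qed.

Lemma frac1_eq_sub_IZR x m : 0 <= x - IZR m < 1 -> frac1 x = x - IZR m.
Proof.
  intros Hm. unfold frac1. do 2 f_equal. unfold Int_part.
  rewrite <- (tech_up x (m + 1)); [lia | |]; rewrite plus_IZR; simpl; lra.
Qed.

Lemma frac1_id x : 0 <= x < 1 -> frac1 x = x.
Proof. intros Hx. rewrite (frac1_eq_sub_IZR x 0); simpl; lra. Qed.

Lemma frac1_shift_IZR x y m : x = y + IZR m -> frac1 x = frac1 y.
Proof.
  intros ->. pose proof (frac1_range y). pose proof (frac1_Int_part y).
  rewrite (frac1_eq_sub_IZR _ (Int_part y + m)); rewrite plus_IZR; lra.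
Qed.

Lemma frac1_mult_irrational_neq_0 a k : irrational a -> k <> 0%Z -> frac1 (IZR k * a) <> 0.
Proof.
  intros Ha Hk E. apply Ha. exists (Int_part (IZR k * a)), k. split; [exact Hk|].
  unfold frac1 in E. lra.
Qed.

Lemma irrational_opp a : irrational a -> irrational (- a).
Proof.
  intros Ha [m [k [Hk E]]]. apply Ha. exists m, (- k)%Z. split; [lia|].
  rewrite opp_IZR. lra.
Qed.

(* With b = {k a} and m = floor (1/b), both {(m+1) k a} = (m+1) b - 1 and
   {-m k a} = 1 - m b lie in (0, b) and add up to b. *)
Lemma frac1_mult_halve a k : irrational a -> 0 < frac1 (IZR k * a) ->
  exists k', 0 < frac1 (IZR k' * a) <= frac1 (IZR k * a) / 2.
Proof.
  intros Ha Hb.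
  set (b := frac1 (IZR k * a)) in *.
  assert (Hk : k <> 0%Z) by (intros ->; unfold b in Hb; rewrite Rmult_0_l, frac1_id in Hb; lra).
  pose proof (frac1_range (IZR k * a)) as Hb1. fold b in Hb1.
  set (i := Int_part (IZR k * a)).
  assert (Hki : IZR k * a = b + IZR i) by apply frac1_Int_part.
  set (m := Int_part (/ b)).
  assert (Hm : IZR m <= / b < IZR m + 1) by (unfold m; pose proof (base_Int_part (/ b)); lra).
  assert (Hinvb : 1 < / b) by (rewrite <- Rinv_1; apply Rinv_lt_contravar; lra).
  assert (Hm1 : (0 < m)%Z) by (apply lt_IZR; simpl; lra).
  assert (Hmb : IZR m * b <= 1).
  { replace 1 with (/ b * b) by (field; lra). apply Rmult_le_compat_r; lra. }
  assert (Hmb1 : 1 < (IZR m + 1) * b).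
  { replace 1 with (/ b * b) at 1 by (field; lra). apply Rmult_lt_compat_r; lra. }
  assert (Hmb' : IZR m * b <> 1).
  { intros E. apply (frac1_mult_irrational_neq_0 a (m * k) Ha ltac:(nia)).
    rewrite (frac1_shift_IZR _ 0 (m * i + 1)); [apply frac1_id; lra|].
    rewrite plus_IZR, !mult_IZR, Rmult_assoc, Hki. simpl. nra. }
  assert (E1 : frac1 (IZR ((m + 1) * k) * a) = (IZR m + 1) * b - 1).
  { rewrite (frac1_shift_IZR _ ((IZR m + 1) * b - 1) ((m + 1) * i + 1)); [apply frac1_id; nra|].
    rewrite !plus_IZR, !mult_IZR, plus_IZR, Rmult_assoc, Hki. simpl. ring. }
  assert (E2 : frac1 (IZR (- m * k) * a) = 1 - IZR m * b).
  { rewrite (frac1_shift_IZR _ (1 - IZR m * b) (- m * i - 1)); [apply frac1_id; lra|].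
    rewrite minus_IZR, !mult_IZR, opp_IZR, Rmult_assoc, Hki. simpl. ring. }
  destruct (Rle_or_lt ((IZR m + 1) * b - 1) (b / 2)).
  - exists ((m + 1) * k)%Z. rewrite E1. lra.
  - exists (- m * k)%Z. rewrite E2. lra.
Qed.

Lemma frac1_mult_small a : irrational a -> forall eps, 0 < eps ->
  exists k, 0 < frac1 (IZR k * a) < eps.
Proof.
  intros Ha eps Heps.
  assert (Hpow : forall r, exists k, 0 < frac1 (IZR k * a) <= (/ 2) ^ r).
  { induction r as [|r [k Hk]].
    - exists 1%Z. pose proof (frac1_range (IZR 1 * a)).
      pose proof (frac1_mult_irrational_neq_0 a 1 Ha ltac:(lia)). simpl. lra.
    - destruct (frac1_mult_halve a k Ha (proj1 Hk)) as [k' Hk'].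
      exists k'. simpl. lra. }
  destruct (pow_lt_1_zero (/ 2) ltac:(rewrite Rabs_pos_eq; lra) eps Heps) as [r Hr].
  destruct (Hpow r) as [k Hk]. exists k. specialize (Hr r (le_n r)).
  rewrite Rabs_pos_eq in Hr by (apply pow_le; lra). lra.
Qed.

Lemma frac1_dense_right a : irrational a -> forall eps s, 0 < eps ->
  exists k, 0 < frac1 (s + IZR k * a) < eps.
Proof.
  intros Ha eps s Heps.
  destruct (frac1_mult_small a Ha eps Heps) as [k [Hb0 Hb]].
  set (b := frac1 (IZR k * a)) in *.
  pose proof (frac1_range (IZR k * a)) as Hb1. fold b in Hb1.
  assert (Hki : IZR k * a = b + IZR (Int_part (IZR k * a))) by apply frac1_Int_part.
  set (s' := frac1 s). pose proof (frac1_range s) as Hs'. fold s' in Hs'.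
  assert (Hs : s = s' + IZR (Int_part s)) by apply frac1_Int_part.
  set (j := (Int_part ((1 - s') / b) + 1)%Z).
  assert (Hj : IZR j - 1 <= (1 - s') / b < IZR j).
  { pose proof (base_Int_part ((1 - s') / b)). unfold j. rewrite plus_IZR. simpl. lra. }
  assert (Hj1 : IZR j * b - b <= 1 - s').
  { replace (IZR j * b - b) with ((IZR j - 1) * b) by ring. apply Rle_div_r; lra. }
  assert (Hj2 : 1 - s' < IZR j * b) by (apply (Rlt_div_l (1 - s')); lra).
  exists (j * k)%Z.
  rewrite (frac1_shift_IZR _ (s' + IZR j * b - 1) (Int_part s + j * Int_part (IZR k * a) + 1)).
  - rewrite frac1_id; lra.
  - rewrite !plus_IZR, !mult_IZR, Rmult_assoc, Hki, Hs at 1. simpl. ring.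
Qed.

Lemma frac1_dense_left a : irrational a -> forall eps s, 0 < eps ->
  exists k, 1 - eps < frac1 (s + IZR k * a) < 1.
Proof.
  intros Ha eps s Heps.
  destruct (frac1_dense_right (- a) (irrational_opp a Ha) eps (- s) Heps) as [k Hk].
  exists k. set (u := frac1 (- s + IZR k * - a)) in *.
  pose proof (frac1_range (- s + IZR k * - a)) as Hu1. fold u in Hu1.
  assert (Hu : - s + IZR k * - a = u + IZR (Int_part (- s + IZR k * - a))) by apply frac1_Int_part.
  rewrite (frac1_shift_IZR _ (1 - u) (- Int_part (- s + IZR k * - a) - 1)).
  - rewrite frac1_id; lra.
  - rewrite minus_IZR, opp_IZR. simpl. lra.
Qed.

Definition chi_v (a y : R) : R :=
  if Rle_dec (1 - a) y then (if Rlt_dec y 1 then 1 else 0) else 0.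

Definition chi_vt (a y : R) : R :=
  if Rlt_dec (1 - a) y then (if Rle_dec y 1 then 1 else 0)
  else if Req_EM_T y 0 then 1 else 0.

Ltac decide_chi :=
  unfold chi_v, chi_vt; repeat destruct Rle_dec; repeat destruct Rlt_dec;
  repeat destruct Req_EM_T; lra.

Lemma chi_vt_right_limit a y : 0 < a < 1 -> 0 <= y < 1 -> exists eps, 0 < eps /\
  forall d, 0 < d < eps -> chi_vt a (frac1 (y + d)) = chi_v a y.
Proof.
  intros Ha Hy. destruct (Rle_dec (1 - a) y).
  - exists (1 - y). split; [lra|]. intros d Hd. rewrite frac1_id by lra. decide_chi.
  - exists (1 - a - y). split; [lra|]. intros d Hd. rewrite frac1_id by lra. decide_chi.
Qed.

Lemma chi_v_left_limit a y : 0 < a < 1 -> 0 <= y < 1 -> exists eps, 0 < eps /\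
  forall d, 1 - eps < d < 1 -> chi_v a (frac1 (y + d)) = chi_vt a y.
Proof.
  intros Ha Hy. destruct (Req_dec y 0) as [->|Hy0].
  - exists a. split; [lra|]. intros d Hd. rewrite Rplus_0_l, frac1_id by lra. decide_chi.
  - destruct (Rle_dec y (1 - a)).
    + exists y. split; [lra|]. intros d Hd.
      rewrite (frac1_eq_sub_IZR _ 1) by (simpl; lra). simpl. decide_chi.
    + exists (y - (1 - a)). split; [lra|]. intros d Hd.
      rewrite (frac1_eq_sub_IZR _ 1) by (simpl; lra). simpl. decide_chi.
Qed.

Lemma uniform_eps_on_window (P : Z -> R -> Prop) :
  (forall n, exists eps, 0 < eps /\ forall d, 0 < d < eps -> P n d) ->
  forall r : nat, exists eps, 0 < eps /\
    forall n, (Z.abs n <= Z.of_nat r)%Z -> forall d, 0 < d < eps -> P n d.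
Proof.
  intros HP r. induction r as [|r [e [He Hr]]].
  - destruct (HP 0%Z) as [e [He H0]]. exists e. split; auto.
    intros n Hn d Hd. replace n with 0%Z by lia. auto.
  - destruct (HP (Z.of_nat (S r))) as [e1 [He1 H1]].
    destruct (HP (- Z.of_nat (S r))%Z) as [e2 [He2 H2]].
    exists (Rmin e (Rmin e1 e2)). split; [repeat apply Rmin_pos; auto|].
    intros n Hn d Hd.
    pose proof (Rmin_l e (Rmin e1 e2)). pose proof (Rmin_r e (Rmin e1 e2)).
    pose proof (Rmin_l e1 e2). pose proof (Rmin_r e1 e2).
    destruct (Z_le_gt_dec (Z.abs n) (Z.of_nat r)).
    + apply Hr; auto; lra.
    + assert (n = Z.of_nat (S r) \/ n = (- Z.of_nat (S r))%Z) as [->| ->] by lia;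
        [apply H1 | apply H2]; lra.
Qed.

Lemma approx_by_translates_right a t t' (F G : R -> R) : irrational a ->
  (forall y, 0 <= y < 1 -> exists eps, 0 < eps /\
     forall d, 0 < d < eps -> F (frac1 (y + d)) = G y) ->
  approx_by_translates (fun n => F (frac1 (IZR n * a + t))) (fun n => G (frac1 (IZR n * a + t'))).
Proof.
  intros Ha Hlim r.
  destruct (uniform_eps_on_window
    (fun n d => F (frac1 (frac1 (IZR n * a + t') + d)) = G (frac1 (IZR n * a + t'))))
    with (r := r) as [e [He Hw]].
  { intros n. apply Hlim, frac1_range. }
  destruct (frac1_dense_right a Ha e (t - t') He) as [k Hk].
  exists k. intros n Hn. unfold translate. rewrite <- (Hw n Hn _ Hk). f_equal.
  apply (frac1_shift_IZR _ _ (Int_part (IZR n * a + t') + Int_part (t - t' + IZR k * a))).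
  rewrite !plus_IZR. unfold frac1. ring.
Qed.

Lemma approx_by_translates_left a t t' (F G : R -> R) : irrational a ->
  (forall y, 0 <= y < 1 -> exists eps, 0 < eps /\
     forall d, 1 - eps < d < 1 -> F (frac1 (y + d)) = G y) ->
  approx_by_translates (fun n => F (frac1 (IZR n * a + t))) (fun n => G (frac1 (IZR n * a + t'))).
Proof.
  intros Ha Hlim r.
  destruct (uniform_eps_on_window
    (fun n d => F (frac1 (frac1 (IZR n * a + t') + (1 - d))) = G (frac1 (IZR n * a + t'))))
    with (r := r) as [e [He Hw]].
  { intros n. destruct (Hlim _ (frac1_range (IZR n * a + t'))) as [e [He Hd]].
    exists e. split; auto. intros d Hd'. apply Hd. lra. }
  destruct (frac1_dense_left a Ha e (t - t') He) as [k Hk].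
  exists k. intros n Hn. unfold translate.
  rewrite <- (Hw n Hn (1 - frac1 (t - t' + IZR k * a)) ltac:(lra)). f_equal.
  apply (frac1_shift_IZR _ _ (Int_part (IZR n * a + t') + Int_part (t - t' + IZR k * a))).
  rewrite !plus_IZR. unfold frac1. ring.
Qed.

Lemma irrational_open_unit a : 0 <= a <= 1 -> irrational a -> 0 < a < 1.
Proof.
  intros Ha Hirr.
  destruct (Req_dec a 0) as [E|]; [exfalso; apply Hirr; exists 0%Z, 1%Z; rewrite E; simpl; split; [lia | ring]|].
  destruct (Req_dec a 1) as [E|]; [exfalso; apply Hirr; exists 1%Z, 1%Z; rewrite E; simpl; split; [lia | ring]|].
  lra.
Qed.

Lemma Rabs_mult_01_le lam x : (x = 0 \/ x = 1) -> Rabs (lam * x) <= Rabs lam.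
Proof. intros [-> | ->]; [rewrite Rmult_0_r, Rabs_R0; apply Rabs_pos | rewrite Rmult_1_r; lra]. Qed.

Lemma Rabs_mult_v_le lam a t n : Rabs (lam * v a t n) <= Rabs lam.
Proof. apply Rabs_mult_01_le. unfold v. repeat destruct Rle_dec; repeat destruct Rlt_dec; auto. Qed.

Lemma Rabs_mult_vt_le lam a t n : Rabs (lam * vt a t n) <= Rabs lam.
Proof.
  apply Rabs_mult_01_le. unfold vt.
  repeat destruct Rle_dec; repeat destruct Rlt_dec; repeat destruct Req_EM_T; auto.
Qed.

Lemma not_spectrum_Ht_H p a lam z t t' : Rbar_le (Finite 1) p -> 0 < a < 1 -> irrational a ->
  ~ spectrum p (Ht lam a t) z -> ~ spectrum p (H lam a t') z.
Proof.
  intros hp Ha Hirr.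
  apply (not_spectrum_approx_by_translates p lam _ _ z (Rabs lam) hp (Rabs_pos _)
           (Rabs_mult_v_le lam a t')).
  apply (approx_by_translates_right a t t' (chi_vt a) (chi_v a) Hirr).
  intros y Hy. apply chi_vt_right_limit; auto.
Qed.

Lemma not_spectrum_H_Ht p a lam z t t' : Rbar_le (Finite 1) p -> 0 < a < 1 -> irrational a ->
  ~ spectrum p (H lam a t) z -> ~ spectrum p (Ht lam a t') z.
Proof.
  intros hp Ha Hirr.
  apply (not_spectrum_approx_by_translates p lam _ _ z (Rabs lam) hp (Rabs_pos _)
           (Rabs_mult_vt_le lam a t')).
  apply (approx_by_translates_left a t t' (chi_v a) (chi_vt a) Hirr).
  intros y Hy. apply chi_v_left_limit; auto.
Qed.

Lemma spectrum_H_iff_Ht p a lam z t t' : Rbar_le (Finite 1) p -> 0 < a < 1 -> irrational a ->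
  spectrum p (H lam a t) z <-> spectrum p (Ht lam a t') z.
Proof.
  intros hp Ha Hirr. split; intros Hs; apply NNPP; intros Hns.
  - exact (not_spectrum_Ht_H p a lam z t' t hp Ha Hirr Hns Hs).
  - exact (not_spectrum_H_Ht p a lam z t t' hp Ha Hirr Hns Hs).
Qed.

Theorem proposition5p2 (p : Rbar) (alpha theta lambda : R) :
  Rbar_le (Finite 1) p ->
  0 <= alpha <= 1 -> irrational alpha ->
  0 <= theta < 1 ->
  forall z : Coquelicot.Complex.C,
    (spectrum p (H lambda alpha 0) z <-> spectrum p (Ht lambda alpha theta) z) /\
    (spectrum p (Ht lambda alpha theta) z <-> spectrum p (H lambda alpha theta) z).
Proof.
  intros hp Ha Hirr _ z.
  pose proof (irrational_open_unit alpha Ha Hirr) as Ha'.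
  split; [| symmetry]; apply spectrum_H_iff_Ht; auto.
Qed.
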